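(* Consider an $(N+1)$-party resource with parties $\mathcal{A}|\mathcal{X}$ and $\mathcal{B}_1|\mathcal{Y}_1,\dots,\mathcal{B}_N|\mathcal{Y}_N$, and write $\overline{\mathcal{B}}=\mathcal{B}_1\otimes\cdots\otimes\mathcal{B}_N$, $\overline{\mathcal{Y}}=\mathcal{Y}_1\otimes\cdots\otimes\mathcal{Y}_N$. Suppose the party $\mathcal{A}|\mathcal{X}$ is classical, i.e. $(\mathsf{T}[\mathcal{A}],\mathsf{T}[\mathcal{X}])\in\{(\mathsf{C},\mathsf{C}),(\mathsf{I},\mathsf{C}),(\mathsf{C},\mathsf{I}),(\mathsf{I},\mathsf{I})\}$, and the set $\mathbf{J}^{\mathrm{free}}_{\overline{\mathcal{B}}|\overline{\mathcal{Y}}}$ of Choi matrices of free $N$-party resources on the parties $\mathcal{B}_k|\mathcal{Y}_k$ is LP-representable. Then the set $\mathbf{J}^{\mathrm{free}}_{\mathcal{A}\overline{\mathcal{B}}|\mathcal{X}\overline{\mathcal{Y}}}$ of Choi matrices of free $(N+1)$-party resources is also LP-representable.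
   Context: Systems have a dimension and a type in $\{\mathsf{I},\mathsf{C},\mathsf{Q}\}$ (trivial = dimension 1, classical, quantum). A multipartite resource is a completely positive linear map from operators on the tensor product of all parties' inputs to operators on the tensor product of all parties' outputs, trace preserving on product inputs, nonsignaling from every party to every other, and satisfying classicality constraints (for a classical output, off-diagonal matrix elements in the computational basis vanish; for a classical input $\mathcal{X}$, the map vanishes on $|i\rangle\langle j|\otimes(\cdot)$ for $i\ne j$). A multipartite resource is free (LOSR-free) if it is a convex combination of tensor products of single-party channels, one per party, of the appropriate types. Choi matrices are $J_R=(R\otimes\mathrm{id})[\bigotimes_k\phi_{\mathcal{X}_k\mathcal{X}_k'}]$ with $\phi$ normalized maximally entangled states. A set $\mathbf{X}\subseteq\mathbb{R}^n$ is LP-representable if $\mathbf{X}=\{x:\exists y,\ c+Px+Qy\ge0\text{ componentwise}\}$ (Hermitian matrices expanded in a real basis). *)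

From HB Require Import structures.
From mathcomp Require Import all_boot all_order all_algebra.
From mathcomp Require Import reals complex.
Set Implicit Arguments. Unset Strict Implicit. Unset Printing Implicit Defensive.
Import Order.TTheory GRing.Theory Num.Theory.
Local Open Scope ring_scope.

(* System types: trivial, classical, quantum *)
Inductive systype := TI | TC | TQ.
Record system := Sys { styp : systype; sdim : nat }.
Definition valid_system (s : system) : Prop :=
  (0 < sdim s)%N /\ (styp s = TI -> sdim s = 1%N).
(* a party  A|X : output system A, input system X *)
Record party := Party { pout : system; pin : system }.
Definition valid_party (q : party) : Prop := valid_system (pout q) /\ valid_system (pin q).

Section Defs.
Variable R : realType.
Local Notation C := (complex R).

Definition mat (T : finType) := T -> T -> C.
Definition hermitian (T : finType) (M : mat T) : Prop := forall i j, M j i = (M i j)^*.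
Definition psd (T : finType) (M : mat T) : Prop :=
  forall v : T -> C, 0 <= \sum_i \sum_j (v i)^* * M i j * v j.
Definition trace (T : finType) (M : mat T) : C := \sum_i M i i.
Definition density (T : finType) (M : mat T) : Prop := psd M /\ trace M = 1.

(* a linear map from operators on In to operators on Out, given by its values
   on the matrix units: K i j a b = <a| K(|i><j|) |b> *)
Definition superop (In Out : finType) := In -> In -> Out -> Out -> C.
Definition apply (In Out : finType) (K : superop In Out) (M : mat In) : mat Out :=
  fun a b => \sum_i \sum_j M i j * K i j a b.
Definition ampl (In Out : finType) (n : nat) (K : superop In Out)
  : superop (In * 'I_n)%type (Out * 'I_n)%type :=
  fun i j a b => K i.1 j.1 a.1 b.1 * ((i.2 == a.2) && (j.2 == b.2))%:R.
Definition cp (In Out : finType) (K : superop In Out) : Prop :=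
  forall (n : nat) (M : mat (In * 'I_n)%type), psd M -> psd (apply (@ampl _ _ n K) M).

(* multi-indices: computational basis of a tensor product of spaces of dims d k *)
Definition idx (P : finType) (d : P -> nat) := {dffun forall k : P, 'I_(d k)}.
Definition tens (P : finType) (d : P -> nat) (M : forall k, mat 'I_(d k)) : mat (idx d) :=
  fun i j => \prod_k M k (i k) (j k).
Definition tens_so (P : finType) (dI dO : P -> nat)
  (E : forall k, superop 'I_(dI k) 'I_(dO k)) : superop (idx dI) (idx dO) :=
  fun i j a b => \prod_k E k (i k) (j k) (a k) (b k).
Definition upd (P : finType) (d : P -> nat) (a : idx d) (k : P) (x : 'I_(d k)) : idx d :=
  [ffun j => @dfwith P (fun j => 'I_(d j)) (fun j => a j) k x j].
(* partial trace over the k-th tensor factor (tensored with the identity on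
   that factor; equality of these is equality of partial traces) *)
Definition ptr (P : finType) (d : P -> nat) (k : P) (M : mat (idx d)) : mat (idx d) :=
  fun a b => \sum_(x : 'I_(d k)) M (upd a x) (upd b x).

Section Parties.
Variables (P : finType) (p : P -> party).
Definition dI (k : P) : nat := sdim (pin (p k)).
Definition dO (k : P) : nat := sdim (pout (p k)).

Definition tp_product (K : superop (idx dI) (idx dO)) : Prop :=
  forall s : forall k, mat 'I_(dI k), (forall k, density (s k)) ->
    trace (apply K (tens s)) = 1.
Definition nonsignaling (K : superop (idx dI) (idx dO)) : Prop :=
  forall (k : P) (s s' : forall k, mat 'I_(dI k)),
    (forall j, j != k -> s j = s' j) -> density (s k) -> density (s' k) ->
    ptr k (apply K (tens s)) = ptr k (apply K (tens s')).
Definition classical_out (k : P) (K : superop (idx dI) (idx dO)) : Prop :=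
  forall (M : mat (idx dI)) (a b : idx dO), a k != b k -> apply K M a b = 0.
Definition classical_in (k : P) (K : superop (idx dI) (idx dO)) : Prop :=
  forall M : mat (idx dI), (forall i j : idx dI, i k = j k -> M i j = 0) ->
    forall a b, apply K M a b = 0.
Definition resource (K : superop (idx dI) (idx dO)) : Prop :=
  [/\ cp K, tp_product K, nonsignaling K &
      forall k, (styp (pout (p k)) = TC -> classical_out k K) /\
                (styp (pin (p k)) = TC -> classical_in k K)].
End Parties.

Definition channel (q : party) (E : superop 'I_(sdim (pin q)) 'I_(sdim (pout q))) : Prop :=
  [/\ cp E,
      forall rho, density rho -> trace (apply E rho) = 1,
      styp (pout q) = TC -> forall M a b, a != b -> apply E M a b = 0 &
      styp (pin q) = TC -> forall M, (forall i j, i = j -> M i j = 0) ->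
        forall a b, apply E M a b = 0].

(* LOSR-free: finite convex combination of tensor products of single-party channels *)
Definition free (P : finType) (p : P -> party) (K : superop (idx (dI p)) (idx (dO p))) : Prop :=
  exists (n : nat) (w : 'I_n -> R) (E : 'I_n -> forall k, superop 'I_(dI p k) 'I_(dO p k)),
    [/\ forall l, 0 <= w l, \sum_l w l = 1,
        forall l k, channel (q := p k) (E l k) &
        K = fun i j a b => \sum_l ((w l)%:C)%C * tens_so (E l) i j a b].

(* Choi matrix (K ⊗ id)[⊗_k φ_{X_k X_k'}], φ normalized maximally entangled;
   basis of output ⊗ copy of input *)
Definition choi (P : finType) (p : P -> party) (K : superop (idx (dI p)) (idx (dO p)))
  : mat (idx (dO p) * idx (dI p))%type :=
  fun x y => K x.2 y.2 x.1 y.1 / (\prod_k (dI p k))%:R.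

Definition Jfree (P : finType) (p : P -> party) : mat (idx (dO p) * idx (dI p))%type -> Prop :=
  fun J => exists K, free (p := p) K /\ J = choi (p := p) K.

Definition coords (T : finType) (M : mat T) : (T * T * bool)%type -> R :=
  fun x => if x.2 then complex.Re (M x.1.1 x.1.2) else complex.Im (M x.1.1 x.1.2).

Definition LP_rep (T : finType) (S : mat T -> Prop) : Prop :=
  exists (m q : nat) (c : 'I_m -> R) (Pm : 'I_m -> (T * T * bool)%type -> R) (Qm : 'I_m -> 'I_q -> R),
    forall M : mat T, S M <->
      (hermitian M /\ exists y : 'I_q -> R,
         forall r, 0 <= c r + \sum_x Pm r x * coords M x + \sum_j Qm r j * y j).
End Defs.

From Pilot Require Import Defs.
From HB Require Import structures.
From mathcomp Require Import all_boot all_order all_algebra.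
From mathcomp Require Import reals complex.
From mathcomp Require Import ring lra.
From Stdlib Require Import ClassicalEpsilon FunctionalExtensionality.
Set Implicit Arguments. Unset Strict Implicit. Unset Printing Implicit Defensive.
Import Order.TTheory GRing.Theory Num.Theory.
Local Open Scope ring_scope.

(* A channel of a party whose input and output are classical or trivial is a stochastic
   matrix p(a|x), hence the mixture over all functions f : X -> A of the deterministic
   channels f with weights prod_x p(f x|x).  Expanding the first tensor factor of every free
   resource in this way shows that the free Choi matrices are exactly the sums
   sum_f t_f (D_f (x) s_f), with t a probability vector, D_f the Choi matrix of f and s_f a
   free Choi matrix of the other parties.  Membership of s_f is linear in t_f s_f once the LP
   of the other parties is homogenized by t_f.  Free Choi matrices have entries of modulus at
   most 1, so adding |t_f s_f| <= t_f makes t_f = 0 force t_f s_f = 0, and the projection of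
   the resulting polyhedron is exactly the free set. *)

Lemma sum_enum_val (V : finType) (Z : nmodType) (F : V -> Z) :
  \sum_v F v = \sum_(i < #|V|) F (enum_val i).
Proof. by rewrite -(big_enum_val F). Qed.

Section Polyhedral.
Variables (R : numDomainType) (W : finType).
Implicit Types (h : (W -> R) -> R) (S : (W -> R) -> Prop).

Definition affine h := exists (c : R) (a : W -> R), forall z, h z = c + \sum_w a w * z w.

Lemma affine_cst (k : R) : affine (fun => k).
Proof. by exists k, (fun => 0) => z; rewrite big1 ?addr0 // => w _; rewrite mul0r. Qed.

Lemma affine_coord (w0 : W) : affine (fun z => z w0).
Proof.
exists 0, (fun w => (w == w0)%:R) => z; rewrite add0r (bigD1 w0) //= eqxx mul1r.
by rewrite big1 ?addr0 // => w /negbTE ->; rewrite mul0r.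
Qed.

Lemma affineD h1 h2 : affine h1 -> affine h2 -> affine (fun z => h1 z + h2 z).
Proof.
move=> [c1 [a1 E1]] [c2 [a2 E2]]; exists (c1 + c2), (fun w => a1 w + a2 w) => z.
rewrite E1 E2 addrACA; congr (_ + _); rewrite -big_split /=.
by apply: eq_bigr => w _; rewrite mulrDl.
Qed.

Lemma affineZ (k : R) h : affine h -> affine (fun z => k * h z).
Proof.
move=> [c [a E]]; exists (k * c), (fun w => k * a w) => z.
by rewrite E mulrDr big_distrr /=; under eq_bigr do rewrite mulrA.
Qed.

Lemma affineN h : affine h -> affine (fun z => - h z).
Proof. by move=> /(affineZ (-1)) [c [a E]]; exists c, a => z; rewrite -E mulN1r. Qed.

Lemma affineB h1 h2 : affine h1 -> affine h2 -> affine (fun z => h1 z - h2 z).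
Proof. by move=> A1 A2; apply: affineD A1 (affineN A2). Qed.

Lemma affine_sum (I : finType) (h : I -> (W -> R) -> R) :
  (forall i, affine (h i)) -> affine (fun z => \sum_i h i z).
Proof.
move=> H; have [ca E] := choice (fun i (ca : R * (W -> R)) =>
  forall z, h i z = ca.1 + \sum_w ca.2 w * z w)
  (fun i => let: ex_intro c (ex_intro a E) := H i in ex_intro _ (c, a) E).
exists (\sum_i (ca i).1), (fun w => \sum_i (ca i).2 w) => z.
rewrite (eq_bigr _ (fun i _ => E i z)) big_split /= exchange_big /=.
by congr (_ + _); apply: eq_bigr => w _; rewrite mulr_suml.
Qed.

Definition polyhedral S := exists (I : finType) (h : I -> (W -> R) -> R),
  (forall i, affine (h i)) /\ forall z, S z <-> forall i, 0 <= h i z.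

Lemma polyhedral_ext S1 S2 : (forall z, S1 z <-> S2 z) -> polyhedral S1 -> polyhedral S2.
Proof. by move=> E [I [h [A H]]]; exists I, h; split=> // z; rewrite -E. Qed.

Lemma polyhedral_ge0 h : affine h -> polyhedral (fun z => 0 <= h z).
Proof. by move=> A; exists unit, (fun => h); split=> // z; split=> [? []|/(_ tt)]. Qed.

Lemma polyhedralI S1 S2 : polyhedral S1 -> polyhedral S2 ->
  polyhedral (fun z => S1 z /\ S2 z).
Proof.
move=> [I1 [h1 [A1 E1]]] [I2 [h2 [A2 E2]]].
exists (I1 + I2)%type, (fun i => match i with inl i1 => h1 i1 | inr i2 => h2 i2 end).
split=> [[]|z] //; rewrite E1 E2; split=> [[H1 H2] []|H] //.
by split=> i; [apply: (H (inl i))|apply: (H (inr i))].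
Qed.

Lemma polyhedral_eq h1 h2 : affine h1 -> affine h2 -> polyhedral (fun z => h1 z = h2 z).
Proof.
move=> A1 A2; apply: polyhedral_ext
  (polyhedralI (polyhedral_ge0 (affineB A1 A2)) (polyhedral_ge0 (affineB A2 A1))) => z.
rewrite !subr_ge0; split=> [[le21 le12]|->] //.
by apply/le_anti; rewrite le12.
Qed.

Lemma polyhedral_all (I : finType) (S : I -> (W -> R) -> Prop) :
  (forall i, polyhedral (S i)) -> polyhedral (fun z => forall i, S i z).
Proof.
move=> H; have [D E] := choice (fun i (D : {J : finType & J -> (W -> R) -> R}) =>
    (forall j, affine (projT2 D j)) /\ forall z, S i z <-> forall j, 0 <= projT2 D j z)
  (fun i => let: ex_intro J (ex_intro h E) := H i in ex_intro _ (existT _ J h) E).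
exists {i : I & projT1 (D i)}, (fun ij => projT2 (D (tag ij)) (tagged ij)).
split=> [[i j]|z]; first exact: (E i).1.
split=> [Sz [i j]|H0 i]; first exact: ((E i).2 z).1 (Sz i) j.
by apply/(E i).2 => j; apply: (H0 (existT (fun i => projT1 (D i)) i j)).
Qed.

End Polyhedral.

Ltac solve_affine := repeat first
  [ apply: affineD | apply: affineN | apply: affine_sum => ? | apply: affineZ
  | apply: affine_coord | apply: affine_cst ].

Definition cat_vec (R : Type) (X V : finType) (g : X -> R) (y : V -> R) : X + V -> R :=
  fun w => match w with inl x => g x | inr v => y v end.

Lemma LP_rep_of_polyhedral (R : realType) (T V : finType) (S : mat R T -> Prop)
    (Phi : ((T * T * bool) + V -> R) -> Prop) :
  polyhedral Phi ->
  (forall M, S M <-> Defs.hermitian M /\ exists y, Phi (cat_vec (coords M) y)) ->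
  LP_rep S.
Proof.
move=> [I [h [A HPhi]]] HS.
have [ca E] := choice (fun i (ca : R * ((T * T * bool) + V -> R)) =>
    forall z, h i z = ca.1 + \sum_w ca.2 w * z w)
  (fun i => let: ex_intro c (ex_intro a E) := A i in ex_intro _ (c, a) E).
pose rowI (r : 'I_#|I|) := ca (enum_val r).
exists #|I|, #|V|, (fun r => (rowI r).1), (fun r x => (rowI r).2 (inl x)),
  (fun r j => (rowI r).2 (inr (enum_val j))).
move=> M; rewrite HS; apply: and_iff_compat_l; split=> -[y Hy].
- exists (fun j => y (enum_val j)) => r; have := (HPhi _).1 Hy (enum_val r).
  by rewrite E big_sumType /= addrA (sum_enum_val (fun v => (ca _).2 (inr v) * y v)).
- exists (fun v => y (enum_rank v)); apply/HPhi => i; have := Hy (enum_rank i).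
  rewrite /rowI enum_rankK E big_sumType /= addrA.
  rewrite (sum_enum_val (fun v => (ca i).2 (inr v) * y (enum_rank v))).
  by under [X in _ -> _ <= _ + X]eq_bigr do rewrite enum_valK.
Qed.

Section Delta.
Variables (R : pzSemiRingType) (I : finType) (x : I) (F : I -> R).

Lemma sum_delta_mull : \sum_i (i == x)%:R * F i = F x.
Proof. by rewrite (bigD1 x) //= eqxx mul1r big1 ?addr0 // => i /negbTE ->; rewrite mul0r. Qed.

Lemma sum_delta_mulr : \sum_i F i * (i == x)%:R = F x.
Proof. by rewrite (bigD1 x) //= eqxx mulr1 big1 ?addr0 // => i /negbTE ->; rewrite mulr0. Qed.

End Delta.

Lemma natr_andb (R : pzSemiRingType) (a b : bool) : ((a && b)%:R : R) = a%:R * b%:R.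
Proof. by case: a; case: b; rewrite ?mul1r ?mul0r. Qed.

Lemma ord_dim1 (n : nat) (x y : 'I_n) : n = 1%N -> x = y.
Proof.
move=> n1; apply/val_inj.
have x0 : (val x < 1)%N by rewrite -n1 ltn_ord.
have y0 : (val y < 1)%N by rewrite -n1 ltn_ord.
by move: x0 y0; rewrite !ltnS !leqn0 => /eqP -> /eqP ->.
Qed.

Lemma sum_tagged (I : finType) (J : I -> finType) (Z : nmodType) (F : {i : I & J i} -> Z) :
  \sum_ij F ij = \sum_i \sum_(j : J i) F (Tagged J j).
Proof.
rewrite (@sig_big_dep _ _ _ I J xpredT (fun i => xpredT) (fun i j => F (Tagged J j))).
by apply: eq_bigr => -[i j].
Qed.

Lemma normr_div_natr (F : numFieldType) (x : F) (n : nat) : `|x / n%:R| <= `|x|.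
Proof.
case: n => [|n]; first by rewrite invr0 mulr0 normr0 normr_ge0.
rewrite normrM normfV ler_pdivrMr ?normr_gt0 ?pnatr_eq0 // ler_peMr //.
by rewrite ger0_norm // ler1n.
Qed.

Lemma normalize_weights (R : numFieldType) (L : finType) (a w : L -> R) :
  (forall l, 0 <= a l) -> (forall l, 0 <= w l) -> \sum_l w l = 1 ->
  exists w' : L -> R,
    [/\ forall l, 0 <= w' l, \sum_l w' l = 1 & forall l, (\sum_m a m) * w' l = a l].
Proof.
move=> a_ge0 w_ge0 w_sum1; have [a_sum0|a_sum_neq0] := eqVneq (\sum_m a m) 0.
  exists w; split=> // l; rewrite a_sum0 mul0r.
  by rewrite (psumr_eq0P (fun m _ => a_ge0 m) a_sum0).
exists (fun l => a l / \sum_m a m); split=> [l||l]; last by rewrite mulrC divfK.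
  by rewrite divr_ge0 // sumr_ge0.
by rewrite -mulr_suml divff.
Qed.

Section ProductDistribution.
Variables (R : comPzRingType) (I J : finType) (pr : I -> J -> R).
Hypothesis pr_sum1 : forall x, \sum_a pr x a = 1.

Lemma sum_ffun_prod1 : \sum_(f : {ffun I -> J}) \prod_x pr x (f x) = 1.
Proof. by rewrite -bigA_distr_bigA big1. Qed.

Lemma sum_ffun_prod_marginal x0 a0 :
  \sum_(f : {ffun I -> J}) (\prod_x pr x (f x)) * (f x0 == a0)%:R = pr x0 a0.
Proof.
pose G x a := pr x a * (if x == x0 then (a == a0)%:R else 1).
transitivity (\sum_(f : {ffun I -> J}) \prod_x G x (f x)).
  apply: eq_bigr => f _; rewrite (bigD1 x0) //= [RHS](bigD1 x0) //= /G eqxx mulrAC; congr (_ * _).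
  by apply: eq_bigr => x neq_x; rewrite (negbTE neq_x) mulr1.
rewrite -bigA_distr_bigA (bigD1 x0) //= [X in _ * X]big1 => [|x /negbTE neq_x].
  by rewrite mulr1 /G eqxx sum_delta_mulr.
by under eq_bigr do rewrite /G neq_x mulr1.
Qed.

End ProductDistribution.

Section Superop.
Variable R : realType.

Lemma superop_ext (In Out : finType) (K1 K2 : superop R In Out) :
  (forall i j a b, K1 i j a b = K2 i j a b) -> K1 = K2.
Proof.
move=> E; do 3 apply: functional_extensionality => ?.
exact: functional_extensionality.
Qed.

Lemma mat_ext (T : finType) (M1 M2 : mat R T) : (forall u v, M1 u v = M2 u v) -> M1 = M2.
Proof. by move=> E; apply: functional_extensionality => u; apply: functional_extensionality. Qed.

Definition mixture (In Out L : finType) (w : L -> R) (K : L -> superop R In Out)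
  : superop R In Out := fun i j a b => \sum_l (w l)%:C%C * K l i j a b.

End Superop.

Section Psd.
Variables (R : realType) (T : finType).
Local Notation C := (complex R).
Implicit Types (M : mat R T) (x y : T).

Definition qform M (v : T -> C) := \sum_i \sum_j (v i)^* * M i j * v j.

Lemma psd_qform_pair M x y (al be : C) : psd M ->
  0 <= al^* * al * M x x + al^* * be * M x y + be^* * al * M y x + be^* * be * M y y.
Proof.
pose v i := al * (i == x)%:R + be * (i == y)%:R.
have Mv i : \sum_j M i j * v j = M i x * al + M i y * be.
  rewrite -(sum_delta_mulr x (fun j => M i j * al)) -(sum_delta_mulr y (fun j => M i j * be)).
  by rewrite -big_split; apply: eq_bigr => j _ /=; rewrite /v; ring.
move=> /(_ v); congr (_ <= _).
under eq_bigr => i _ do under eq_bigr => j _ do rewrite -mulrA.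
under eq_bigr do rewrite -big_distrr /= Mv.
transitivity (al^* * (M x x * al + M x y * be) + be^* * (M y x * al + M y y * be)).
  rewrite -(sum_delta_mull x (fun i => al^* * (M i x * al + M i y * be))).
  rewrite -(sum_delta_mull y (fun i => be^* * (M i x * al + M i y * be))) -big_split.
  by apply: eq_bigr => i _ /=; rewrite /v rmorphD !rmorphM /= !conjC_nat; ring.
ring.
Qed.

Lemma psd_diag_ge0 M x : psd M -> 0 <= M x x.
Proof.
by move=> /(psd_qform_pair x x 1 0); rewrite conjC1 conjC0 !(mul0r, mulr0, addr0, mul1r).
Qed.

(* Polarization: the quadratic form is real on [e_x + e_y] and on [e_x + 'i e_y]. *)
Lemma psd_hermitian M : psd M -> Defs.hermitian M.
Proof.
have conj_ge0 (z : C) : 0 <= z -> z^* = z by move/ger0_real/conj_Creal.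
move=> psdM x y; have Dx := conj_ge0 _ (psd_diag_ge0 x psdM).
have Dy := conj_ge0 _ (psd_diag_ge0 y psdM).
have Q1 := conj_ge0 _ (psd_qform_pair x y 1 1 psdM).
have Qi := conj_ge0 _ (psd_qform_pair x y 1 'i psdM).
have ii : 'i^* * 'i = 1 :> C by rewrite conjCi mulNr -expr2 sqrCi opprK.
move: Q1 Qi; rewrite ii !rmorphD !rmorphM /= !conjCK conjC1 conjCi Dx Dy !mul1r.
set a := M x y; set b := M y x => Q1 Qi.
have re : a^* + b^* = a + b.
  by apply: (addIr (M y y)); apply: (addrI (M x x)); rewrite !addrA.
have im : b^* - a^* = a - b.
  apply: (mulfI (@neq0Ci (complex R))); apply: (addrI (M x x + M y y)).
  by transitivity (M x x + - 'i * a^* + 'i * 1 * b^* + M y y); [ring|rewrite Qi; ring].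
have two : (2%:R : C) != 0 by rewrite pnatr_eq0.
apply: (canRL (@conjCK _)); apply: (mulfI two).
by transitivity ((a^* + b^*) + (b^* - a^*)); [ring|rewrite re im; ring].
Qed.

Lemma psd_norm_le1 M x y : psd M -> M x x <= 1 -> M y y <= 1 -> `|M x y| <= 1.
Proof.
move=> psdM Mxx Myy; have := psd_qform_pair x y 1 (- (M x y)^*) psdM.
rewrite [M y x](psd_hermitian psdM); set a := M x y.
have -> : 1^* * 1 * M x x + 1^* * - a^* * a + (- a^*)^* * 1 * a^* + (- a^*)^* * - a^* * M y y
    = M x x - (a * a^*) * (2%:R - M y y) by rewrite !rmorphN /= conjCK conjC1; ring.
rewrite subr_ge0 => le_aa.
have aa_ge0 : 0 <= a * a^* := mul_conjC_ge0 a.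
have le1_2 : 1 <= 2%:R - M y y by rewrite lerBrDl -[2%:R]/(1 + 1 : C) lerD2r.
rewrite -(@expr_le1 _ 2) // normCK.
exact: le_trans (ler_peMr aa_ge0 le1_2) (le_trans le_aa Mxx).
Qed.

End Psd.

Section Coords.
Variables (R : realType) (T : finType).
Local Notation C := (complex R).

Lemma conj_realC (r : R) : (r%:C%C : C)^* = r%:C%C.
Proof. exact: conjc_real. Qed.

Lemma coords_lincomb (L : finType) (r : L -> T -> T -> R) (M : L -> mat R T) x :
  coords (fun u v => \sum_l (r l u v)%:C%C * M l u v) x = \sum_l r l x.1.1 x.1.2 * coords (M l) x.
Proof.
case: x => [[u v] b]; rewrite /coords /=; case: b;
  elim/big_rec2: _ => [|l y [z1 z2] _ <-] //=;
  by case: (M l u v) => a c /=; rewrite ?mul0r ?subr0 ?addr0.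
Qed.

Lemma coords_norm_le1 (M : mat R T) x : (forall u v, `|M u v| <= 1) -> `|coords M x| <= 1.
Proof.
move=> M_le1; case: x => [[u v] []]; rewrite /coords /= -lecR.
  exact: le_trans (normc_ge_Re _) (M_le1 u v).
apply: le_trans (M_le1 u v); have := normc_ge_Re (M u v * 'i%C).
by rewrite ReiNIm normrN normrM normCi mulr1.
Qed.
Definition mat_of_coords (g : T * T * bool -> R) : mat R T :=
  fun u v => (g (u, v, true) +i* g (u, v, false))%C.

Lemma coords_of_mat g x : coords (mat_of_coords g) x = g x.
Proof. by case: x => [[u v] []]. Qed.

Lemma coords_inj (M1 M2 : mat R T) : (forall x, coords M1 x = coords M2 x) -> M1 = M2.
Proof.
move=> E; apply: mat_ext => u v; have := E (u, v, true); have := E (u, v, false).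
by rewrite /coords /=; case: (M1 u v) => ? ?; case: (M2 u v) => ? ? /= -> ->.
Qed.

Lemma hermitian_coords (M : mat R T) u v : Defs.hermitian M ->
  coords M (u, v, true) = coords M (v, u, true) /\
  coords M (u, v, false) = - coords M (v, u, false).
Proof. by move=> /(_ v u); rewrite /coords /= => ->; case: (M v u). Qed.

Lemma hermitian_mat_of_coords g :
  (forall u v, g (u, v, true) = g (v, u, true) /\ g (u, v, false) = - g (v, u, false)) ->
  Defs.hermitian (mat_of_coords g).
Proof.
by move=> gsym u v; rewrite /mat_of_coords; have [-> ->] := gsym v u.
Qed.
End Coords.

Section Kraus.
Variable R : realType.
Local Notation C := (complex R).

Lemma sum_pair_delta_snd (X Y : finType) (y : Y) (G : X * Y -> C) :
  \sum_A (A.2 == y)%:R * G A = \sum_x G (x, y).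
Proof.
rewrite (eq_bigr (fun A => (A.2 == y)%:R * G (A.1, A.2))); last by case.
rewrite -(pair_bigA _ (fun x y' => (y' == y)%:R * G (x, y'))) /=.
by apply: eq_bigr => x _; rewrite sum_delta_mull.
Qed.

Lemma apply_ampl (In Out : finType) (n : nat) (K : superop R In Out)
    (M : mat R (In * 'I_n)%type) (a b : Out * 'I_n) :
  apply (ampl (n := n) K) M a b = \sum_i \sum_j M (i, a.2) (j, b.2) * K i j a.1 b.1.
Proof.
rewrite /apply /ampl -(sum_pair_delta_snd a.2 (fun I => \sum_j M I (j, b.2) * K I.1 j a.1 b.1)).
apply: eq_bigr => I _; rewrite -(sum_pair_delta_snd b.2 (fun J => M I J * K I.1 J.1 a.1 b.1)).
rewrite big_distrr /=; apply: eq_bigr => J _; by rewrite natr_andb; ring.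
Qed.

Lemma sum_pair_swap (X Y Z : finType) (F : X * Z -> Y -> C) :
  \sum_A \sum_y F A y = \sum_B \sum_x F (x, B.2) B.1.
Proof.
rewrite (eq_bigr (fun A => \sum_y F (A.1, A.2) y)); last by case.
rewrite -(pair_bigA _ (fun x z => \sum_y F (x, z) y)) exchange_big /=.
under eq_bigr do rewrite exchange_big /=.
rewrite exchange_big /= (pair_bigA _ (fun y z => \sum_x F (x, z) y)).
by apply: eq_bigr => -[].
Qed.

Lemma qform_apply_ampl (In Out : finType) (n : nat) (K : superop R In Out)
    (M : mat R (In * 'I_n)%type) (v : Out * 'I_n -> C) :
  qform (apply (ampl (n := n) K) M) v =
  \sum_I \sum_J M I J * \sum_a \sum_b (v (a, I.2))^* * K I.1 J.1 a b * v (b, J.2).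
Proof.
have distr (x y : C) (F : In -> In -> C) :
    x * (\sum_i \sum_j F i j) * y = \sum_i \sum_j x * F i j * y.
  rewrite mulr_sumr mulr_suml; apply: eq_bigr => i _.
  by rewrite mulr_sumr mulr_suml.
rewrite /qform; under eq_bigr => A _ do under eq_bigr => B _ do rewrite apply_ampl distr.
under eq_bigr do rewrite exchange_big /=.
rewrite sum_pair_swap; under eq_bigr do under eq_bigr do rewrite sum_pair_swap /=.
under eq_bigr do rewrite exchange_big /=.
apply: eq_bigr => -[i m] _; apply: eq_bigr => -[j m'] _ /=.
rewrite mulr_sumr; apply: eq_bigr => a _; rewrite mulr_sumr; apply: eq_bigr => b _; ring.
Qed.

Definition kraus (In Out L : finType) (V : L -> Out -> In -> C) : superop R In Out :=
  fun i j a b => \sum_l V l a i * (V l b j)^*.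

Lemma kraus_cp (In Out L : finType) (V : L -> Out -> In -> C) : cp (kraus V).
Proof.
move=> n M psdM v; change (0 <= qform (apply (ampl (n := n) (kraus V)) M) v).
pose w l (J : In * 'I_n) := \sum_b (V l b J.1)^* * v (b, J.2).
suff -> : qform (apply (ampl (n := n) (kraus V)) M) v = \sum_l qform M (w l).
  by apply: sumr_ge0 => l _; apply: psdM.
rewrite qform_apply_ampl /qform; symmetry.
rewrite exchange_big /=; apply: eq_bigr => I _.
rewrite exchange_big /=; apply: eq_bigr => J _.
have -> : \sum_a \sum_b (v (a, I.2))^* * kraus V I.1 J.1 a b * v (b, J.2) =
    \sum_l (w l I)^* * w l J.
  under eq_bigr do under eq_bigr do rewrite /kraus mulr_sumr mulr_suml.
  under eq_bigr do rewrite exchange_big /=.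
  rewrite exchange_big /=; apply: eq_bigr => l _.
  rewrite /w rmorph_sum big_distrl /=; apply: eq_bigr => a _.
  rewrite big_distrr /=; apply: eq_bigr => b _.
  by rewrite /kraus rmorphM /= conjCK; ring.
by rewrite big_distrr; apply: eq_bigr => l _ /=; ring.
Qed.
End Kraus.

Section DeltaMat.
Variable R : realType.
Local Notation C := (complex R).

Definition delta_mat (T : finType) (i j : T) : mat R T :=
  fun x y => ((x == i) && (y == j))%:R.

Lemma sum_delta_mat (T : finType) (i j : T) (F : T -> T -> C) :
  \sum_x \sum_y delta_mat i j x y * F x y = F i j.
Proof.
rewrite -(sum_delta_mulr j (F i)) -(sum_delta_mull i (fun x => \sum_y F x y * (y == j)%:R)).
apply: eq_bigr => x _; rewrite big_distrr; apply: eq_bigr => y _ /=.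
by rewrite /delta_mat natr_andb; ring.
Qed.

Lemma apply_delta_mat (In Out : finType) (K : superop R In Out) i j a b :
  apply K (delta_mat i j) a b = K i j a b.
Proof. exact: (sum_delta_mat i j (fun x y => K x y a b)). Qed.

Lemma delta_mat_density (T : finType) (i : T) : density (delta_mat i i).
Proof.
split=> [v|]; last first.
  rewrite /trace -(sum_delta_mull i (fun => 1)).
  by apply: eq_bigr => x _; rewrite /delta_mat andbb mulr1.
change (0 <= qform (delta_mat i i) v).
have -> : qform (delta_mat i i) v = v i * (v i)^*.
  rewrite /qform [RHS]mulrC -(sum_delta_mat i i (fun x y => (v x)^* * v y)).
  by apply: eq_bigr => x _; apply: eq_bigr => y _; ring.
exact: mul_conjC_ge0.
Qed.

(* Kraus operators |f x><x|. *)
Definition det_chan (In Out : finType) (f : In -> Out) : superop R In Out :=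
  kraus (fun (x : In) a i => ((x == i) && (f x == a))%:R).

Lemma det_chanE (In Out : finType) (f : In -> Out) i j a b :
  det_chan f i j a b = ((i == j) && (a == b) && (f i == a))%:R.
Proof.
rewrite /det_chan /kraus; under eq_bigr do rewrite conjC_nat natr_andb -mulrA.
rewrite sum_delta_mull -!natr_andb; congr (_%:R).
by case: (f i =P a) => [<-|]; rewrite ?andbF // andbC [f i == b]eq_sym.
Qed.

End DeltaMat.

Section Channel.
Variables (R : realType) (q : party).
Local Notation C := (complex R).
Local Notation dI := (sdim (pin q)).
Local Notation dO := (sdim (pout q)).
Implicit Types E : superop R 'I_dI 'I_dO.

Lemma channel_choi_psd E : channel E ->
  psd (fun x y : 'I_dO * 'I_dI => E x.2 y.2 x.1 y.1).
Proof.
case=> cpE _ _ _.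
pose Phi (I J : 'I_dI * 'I_dI) : C := ((I.1 == I.2) && (J.1 == J.2))%:R.
have psdPhi : psd Phi.
  move=> v; change (0 <= qform Phi v).
  pose s := \sum_I (I.1 == I.2)%:R * v I.
  suff -> : qform Phi v = s * s^* by apply: mul_conjC_ge0.
  rewrite /qform mulrC /s rmorph_sum big_distrl /=; apply: eq_bigr => I _.
  rewrite big_distrr /=; apply: eq_bigr => J _.
  by rewrite /Phi natr_andb rmorphM /= conjC_nat; ring.
move=> v; have := cpE dI Phi psdPhi v; congr (_ <= _).
apply: eq_bigr => -[a m] _; apply: eq_bigr => -[b m'] _; rewrite apply_ampl /=.
congr (_ * _ * _); rewrite -(sum_delta_mat m m' (fun i j => E i j a b)).
by apply: eq_bigr => i _; apply: eq_bigr => j _; rewrite /Phi /delta_mat.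
Qed.

Lemma channel_trace E i : channel E -> \sum_a E i i a a = 1.
Proof.
case=> _ tpE _ _; rewrite -(tpE _ (delta_mat_density R i)).
by apply: eq_bigr => a _; rewrite apply_delta_mat.
Qed.

Lemma channel_diag_ge0 E i a : channel E -> 0 <= E i i a a.
Proof. by move=> /channel_choi_psd /(psd_diag_ge0 (a, i)). Qed.

Lemma channel_diag_le1 E i a : channel E -> E i i a a <= 1.
Proof.
move=> chE; rewrite -(channel_trace i chE) (bigD1 a) //= lerDl.
by apply: sumr_ge0 => b _; apply: channel_diag_ge0.
Qed.

Lemma channel_norm_le1 E i j a b : channel E -> `|E i j a b| <= 1.
Proof.
move=> chE; apply: (psd_norm_le1 (x := (a, i)) (y := (b, j)) (channel_choi_psd chE));
  exact: channel_diag_le1.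
Qed.

Lemma det_chan_channel (f : 'I_dI -> 'I_dO) : channel (q := q) (det_chan R f).
Proof.
split=> [|rho [_ <-]|_ M a b neq_ab|_ M M0 a b]; first exact: kraus_cp.
- rewrite /trace /apply exchange_big /=; apply: eq_bigr => i _.
  transitivity (\sum_a rho i i * (a == f i)%:R); last by rewrite sum_delta_mulr.
  apply: eq_bigr => a _; rewrite (bigD1 i) //= big1 => [|j /negbTE neq_ij].
    by rewrite det_chanE !eqxx addr0 eq_sym.
  by rewrite det_chanE [i == j]eq_sym neq_ij mulr0.
- rewrite /apply big1 // => i _; rewrite big1 // => j _.
  by rewrite det_chanE (negbTE neq_ab) andbF mulr0.
- rewrite /apply big1 // => i _; rewrite big1 // => j _; rewrite det_chanE.
  by have [->|_] := eqVneq i j; [rewrite M0 ?mul0r|rewrite mulr0].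
Qed.

Hypotheses (q_valid : valid_party q) (q_out : styp (pout q) = TC \/ styp (pout q) = TI)
  (q_in : styp (pin q) = TC \/ styp (pin q) = TI).

Lemma classical_channelE E : channel E ->
  forall i j a b, E i j a b = ((i == j) && (a == b))%:R * E i i a a.
Proof.
have [[_ trivO] [_ trivI]] := q_valid.
case=> _ _ clO clI i j a b.
have [<-|neq_ij] := eqVneq i j; last first.
  rewrite mul0r; case: q_in => [/clI clI'|/trivI/ord_dim1 eq_in]; last by case/eqP: neq_ij.
  rewrite -apply_delta_mat; apply: clI' => x y ->.
  by rewrite /delta_mat; case: eqP => //= ->; rewrite (negbTE neq_ij).
have [<-|neq_ab] := eqVneq a b; first by rewrite mul1r.
rewrite mul0r -(apply_delta_mat E i i a b); case: q_out => [/clO|/trivO/ord_dim1 eq_out].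
  by apply.
by case/eqP: neq_ab.
Qed.

Lemma classical_channel_mixture E : channel E ->
  exists pr : {ffun 'I_dI -> 'I_dO} -> R,
    [/\ forall f, 0 <= pr f, \sum_f pr f = 1 & E = mixture pr (fun f => det_chan R f)].
Proof.
move=> chE; pose P x a := complex.Re (E x x a a).
have EP x a : E x x a a = (P x a)%:C%C.
  by rewrite /P RRe_real // ger0_real // channel_diag_ge0.
have P_ge0 x a : 0 <= P x a by rewrite -lecR -EP channel_diag_ge0.
have P_sum1 x : \sum_a P x a = 1.
  apply: complexI; rewrite rmorph_sum rmorph1 /= -(channel_trace x chE).
  by under eq_bigr do rewrite -EP.
exists (fun f => \prod_x P x (f x)); split.
- by move=> f; apply: prodr_ge0.
- exact: sum_ffun_prod1.
apply: superop_ext => i j a b; rewrite (classical_channelE chE) EP.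
rewrite -(sum_ffun_prod_marginal P_sum1 i a) rmorph_sum big_distrr; apply: eq_bigr => f _ /=.
by rewrite det_chanE !natr_andb rmorphM /= rmorph_nat; ring.
Qed.
End Channel.

Section Free.
Variables (R : realType) (P : finType) (p : P -> party).
Local Notation SO := (superop R (idx (dI p)) (idx (dO p))).
Local Notation Choi := (mat R (idx (dO p) * idx (dI p))%type).
Local Notation SOk k := (superop R 'I_(dI p k) 'I_(dO p k)).

Lemma free_mixture (L : finType) (w : L -> R) (E : L -> forall k, SOk k) :
  (forall l, 0 <= w l) -> \sum_l w l = 1 -> (forall l k, channel (q := p k) (E l k)) ->
  Defs.free (p := p) (mixture w (fun l => tens_so (E l))).
Proof.
move=> w_ge0 w_sum1 chE; exists #|L|, (w \o enum_val), (E \o enum_val).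
split=> [l|||]; [exact: w_ge0|by rewrite -w_sum1 [RHS]sum_enum_val|by move=> l k; apply: chE|].
by apply: superop_ext => i j a b; rewrite /mixture [LHS]sum_enum_val.
Qed.

Lemma free_convex (L : finType) (t : L -> R) (K : L -> SO) :
  (forall l, 0 <= t l) -> \sum_l t l = 1 -> (forall l, Defs.free (p := p) (K l)) ->
  Defs.free (p := p) (mixture t K).
Proof.
move=> t_ge0 t_sum1 freeK.
have [D HD] := choice (fun l (D : {n : nat & ('I_n -> R) * ('I_n -> forall k, SOk k)}) =>
    [/\ forall m, 0 <= (projT2 D).1 m, \sum_m (projT2 D).1 m = 1,
        forall m k, channel (q := p k) ((projT2 D).2 m k) &
        K l = mixture (projT2 D).1 (fun m => tens_so ((projT2 D).2 m))])
  (fun l => let: ex_intro n (ex_intro w (ex_intro E HE)) := freeK l in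
            ex_intro _ (existT _ n (w, E)) HE).
pose w (lm : {l : L & 'I_(projT1 (D l))}) := t (tag lm) * (projT2 (D (tag lm))).1 (tagged lm).
have -> : mixture t K = mixture w (fun lm => tens_so ((projT2 (D (tag lm))).2 (tagged lm))).
  apply: superop_ext => i j a b; rewrite /mixture sum_tagged /=.
  apply: eq_bigr => l _; have [_ _ _ ->] := HD l; rewrite /mixture big_distrr /=.
  by apply: eq_bigr => m _; rewrite /w rmorphM mulrA.
apply: free_mixture => [lm||lm k]; first by apply: mulr_ge0 => //; case: (HD (tag lm)).
- rewrite sum_tagged /= -t_sum1; apply: eq_bigr => l _.
  by rewrite /w /= -big_distrr /=; case: (HD l) => _ -> _ _; rewrite mulr1.
- by case: (HD (tag lm)).
Qed.

Lemma choi_mixture (L : finType) (w : L -> R) (K : L -> SO) u v :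
  choi (mixture w K) u v = \sum_l (w l)%:C%C * choi (K l) u v.
Proof. by rewrite /choi /mixture mulr_suml; apply: eq_bigr => l _; rewrite mulrA. Qed.

Lemma Jfree_convex (L : finType) (t : L -> R) (s : L -> Choi) :
  (forall l, 0 <= t l) -> \sum_l t l = 1 -> (forall l, Jfree (p := p) (s l)) ->
  Jfree (p := p) (fun u v => \sum_l (t l)%:C%C * s l u v).
Proof.
move=> t_ge0 t_sum1 Js.
have [K HK] := choice (fun l (K : SO) => Defs.free (p := p) K /\ s l = choi K) Js.
exists (mixture t K); split; first by apply: free_convex => // l; case: (HK l).
by apply: mat_ext => u v; rewrite choi_mixture; apply: eq_bigr => l _; case: (HK l) => _ ->.
Qed.

Lemma Jfree_norm_le1 (s : Choi) u v : Jfree (p := p) s -> `|s u v| <= 1.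
Proof.
case=> K [[n [w [E [w_ge0 w_sum1 chE ->]]]] ->].
apply: le_trans (normr_div_natr _ _) _; apply: le_trans (ler_norm_sum _ _ _) _.
rewrite -(@rmorph1 _ _ (real_complex R)) -w_sum1 rmorph_sum /=; apply: ler_sum => l _.
rewrite normrM ger0_norm ?ler0c // ler_piMr ?ler0c // /tens_so normr_prod.
by apply: prodr_ile1 => k _; rewrite normr_ge0 channel_norm_le1.
Qed.
End Free.

Lemma Jfree_coords_le1 (R : realType) (P : finType) (p : P -> party)
    (M : mat R (idx (dO p) * idx (dI p))%type) x :
  Jfree (p := p) M -> `|coords M x| <= 1.
Proof. by move=> JM; apply: coords_norm_le1 => u v; apply: Jfree_norm_le1 JM. Qed.

Section Dcons.
Variables (N : nat) (T : 'I_N.+1 -> Type) (x0 : T ord0) (xs : forall k : 'I_N, T (lift ord0 k)).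

Definition dcons (k : 'I_N.+1) : T k :=
  match unliftP ord0 k with
  | UnliftSome j e => eq_rect _ T (xs j) k (esym e)
  | UnliftNone e => eq_rect _ T x0 k (esym e)
  end.

Lemma dcons0 : dcons ord0 = x0.
Proof.
rewrite /dcons; case: unliftP => [j e|e]; last by rewrite (eq_irrelevance (esym e) erefl).
by exfalso; move: (neq_lift ord0 j); rewrite -e eqxx.
Qed.

Lemma dcons_lift j : dcons (lift ord0 j) = xs j.
Proof.
rewrite /dcons; case: unliftP => [j' e|e]; last by exfalso; move: (neq_lift ord0 j); rewrite e eqxx.
by have eq_j := lift_inj e; subst j'; rewrite (eq_irrelevance (esym e) erefl).
Qed.

End Dcons.

Definition idx_behead (N : nat) (d : 'I_N.+1 -> nat) (i : idx d)
  : idx (fun k : 'I_N => d (lift ord0 k)) :=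
  @finfun _ (fun k => 'I_(d (lift ord0 k))) (fun k => i (lift ord0 k)).

Lemma tens_so_recl (R : realType) (N : nat) (dI dO : 'I_N.+1 -> nat)
    (E : forall k, superop R 'I_(dI k) 'I_(dO k)) i j a b :
  tens_so E i j a b = E ord0 (i ord0) (j ord0) (a ord0) (b ord0) *
    tens_so (fun k => E (lift ord0 k)) (idx_behead i) (idx_behead j) (idx_behead a) (idx_behead b).
Proof. by rewrite /tens_so big_ord_recl; congr (_ * _); apply: eq_bigr => k _; rewrite !ffunE. Qed.

Section ClassicalFirstParty.
Variables (R : realType) (N : nat) (p : 'I_N.+1 -> party).
Local Notation pB := (fun k : 'I_N => p (lift ord0 k)).
Local Notation dX := (dI p ord0).
Local Notation FF := {ffun 'I_(dI p ord0) -> 'I_(dO p ord0)}.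
Local Notation TA := (idx (dO p) * idx (dI p))%type.
Local Notation TB := (idx (dO pB) * idx (dI pB))%type.

Definition choi_behead (u : TA) : TB := (idx_behead u.1, idx_behead u.2).

Lemma choi_tens_recl (E : forall k, superop R 'I_(dI p k) 'I_(dO p k)) u v :
  choi (tens_so E) u v = E ord0 (u.2 ord0) (v.2 ord0) (u.1 ord0) (v.1 ord0) / dX%:R *
    choi (p := pB) (tens_so (fun k => E (lift ord0 k))) (choi_behead u) (choi_behead v).
Proof. by rewrite /choi tens_so_recl big_ord_recl natrM invfM; ring. Qed.

Lemma choi_tens_dcons (E0 : superop R 'I_(dI p ord0) 'I_(dO p ord0))
    (EB : forall k, superop R 'I_(dI pB k) 'I_(dO pB k)) u v :
  choi (tens_so (@dcons N (fun k => superop R 'I_(dI p k) 'I_(dO p k)) E0 EB)) u v =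
  E0 (u.2 ord0) (v.2 ord0) (u.1 ord0) (v.1 ord0) / dX%:R *
    choi (p := pB) (tens_so EB) (choi_behead u) (choi_behead v).
Proof.
rewrite choi_tens_recl dcons0 /choi /tens_so; congr (_ * (_ / _)).
by apply: eq_bigr => k _; rewrite dcons_lift.
Qed.

Definition det_coef (f : FF) (u v : TA) : R :=
  ((u.2 ord0 == v.2 ord0) && (u.1 ord0 == v.1 ord0) && (f (u.2 ord0) == u.1 ord0))%:R / dX%:R.

Lemma det_coefE f u v :
  (det_coef f u v)%:C%C = det_chan R f (u.2 ord0) (v.2 ord0) (u.1 ord0) (v.1 ord0) / dX%:R.
Proof. by rewrite det_chanE /det_coef rmorphM /= fmorphV /= !rmorph_nat. Qed.

Lemma det_coefC f u v : det_coef f v u = det_coef f u v.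
Proof.
rewrite /det_coef [v.2 ord0 == _]eq_sym [v.1 ord0 == _]eq_sym.
by case: eqP => [->|] //=; case: eqP => [->|] //=; rewrite andbF.
Qed.

Definition classical_ext (f : FF) (s : mat R TB) : mat R TA :=
  fun u v => (det_coef f u v)%:C%C * s (choi_behead u) (choi_behead v).

Lemma coords_classical_mixture (t : FF -> R) (s : FF -> mat R TB) x :
  coords (fun u v => \sum_f (t f)%:C%C * classical_ext f (s f) u v) x =
  \sum_f det_coef f x.1.1 x.1.2 * (t f * coords (s f) (choi_behead x.1.1, choi_behead x.1.2, x.2)).
Proof.
transitivity (coords (fun u v => \sum_f (t f * det_coef f u v)%:C%C *
                         s f (choi_behead u) (choi_behead v)) x).
  by congr (coords _ x); apply: mat_ext => u v; apply: eq_bigr => f _; rewrite rmorphM mulrA.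
by rewrite coords_lincomb; apply: eq_bigr => f _; rewrite mulrA [det_coef _ _ _ * _]mulrC.
Qed.

Lemma Jfree_classical_ext f s : Jfree (p := pB) s -> Jfree (p := p) (classical_ext f s).
Proof.
case=> K [[n [w [E [w_ge0 w_sum1 chE ->]]]] ->].
exists (mixture w (fun l => tens_so (@dcons N (fun k => superop R 'I_(dI p k) 'I_(dO p k))
                                       (det_chan R f) (E l)))); split.
  apply: free_mixture => // l k; case: (unliftP ord0 k) => [j ->|->].
    by rewrite dcons_lift; apply: chE.
  by rewrite dcons0; apply: det_chan_channel.
apply: mat_ext => u v; rewrite /classical_ext !choi_mixture big_distrr.
by apply: eq_bigr => l _ /=; rewrite choi_tens_dcons -det_coefE; ring.
Qed.

Hypotheses (pA_valid : valid_party (p ord0))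
  (pA_out : styp (pout (p ord0)) = TC \/ styp (pout (p ord0)) = TI)
  (pA_in : styp (pin (p ord0)) = TC \/ styp (pin (p ord0)) = TI).

Lemma Jfree_classical_decomposition J : Jfree (p := p) J ->
  exists (t : FF -> R) (s : FF -> mat R TB),
    [/\ forall f, 0 <= t f, \sum_f t f = 1, forall f, Jfree (p := pB) (s f) &
        J = fun u v => \sum_f (t f)%:C%C * classical_ext f (s f) u v].
Proof.
case=> K [[n [w [E [w_ge0 w_sum1 chE ->]]]] ->].
have [pr Hpr] := choice (fun l (pr : FF -> R) =>
    [/\ forall f, 0 <= pr f, \sum_f pr f = 1 & E l ord0 = mixture pr (fun f => det_chan R f)])
  (fun l => classical_channel_mixture pA_valid pA_out pA_in (chE l ord0)).
pose a f l := w l * pr l f.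
have a_ge0 f l : 0 <= a f l by apply: mulr_ge0 => //; case: (Hpr l).
have [w' Hw'] := choice (fun f (w' : 'I_n -> R) =>
    [/\ forall l, 0 <= w' l, \sum_l w' l = 1 & forall l, (\sum_m a f m) * w' l = a f l])
  (fun f => normalize_weights (a_ge0 f) w_ge0 w_sum1).
exists (fun f => \sum_l a f l),
  (fun f => choi (p := pB) (mixture (w' f) (fun l => tens_so (fun k => E l (lift ord0 k))))).
split=> [f||f|].
- exact: sumr_ge0.
- rewrite exchange_big -w_sum1; apply: eq_bigr => l _.
  by rewrite -big_distrr /=; case: (Hpr l) => _ -> _; rewrite mulr1.
- eexists; split; last reflexivity.
  by apply: free_mixture => [l||l k]; case: (Hw' f) => // _ _ _; apply: chE.
apply: mat_ext => u v; rewrite choi_mixture.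
have choi_l l : choi (p := p) (tens_so (E l)) u v = \sum_f (pr l f)%:C%C * ((det_coef f u v)%:C%C *
    choi (p := pB) (tens_so (fun k => E l (lift ord0 k))) (choi_behead u) (choi_behead v)).
  rewrite choi_tens_recl; case: (Hpr l) => _ _ ->; rewrite /mixture !mulr_suml.
  by apply: eq_bigr => f _; rewrite det_coefE; ring.
under eq_bigr => l _ do rewrite [X in _ * X]choi_l big_distrr.
rewrite exchange_big; apply: eq_bigr => f _ /=.
rewrite /classical_ext choi_mixture !big_distrr; apply: eq_bigr => l _ /=.
case: (Hw' f) => _ _ /(_ l) aw'.
by rewrite [LHS]mulrA -rmorphM -/(a f l) -aw' rmorphM /=; ring.
Qed.
End ClassicalFirstParty.

Section Cone.
Variables (R : realType) (T : finType) (S : mat R T -> Prop) (m q : nat) (c : 'I_m -> R)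
  (Pm : 'I_m -> T * T * bool -> R) (Qm : 'I_m -> 'I_q -> R).
Hypothesis S_LP : forall M, S M <-> Defs.hermitian M /\ exists y : 'I_q -> R,
  forall r, 0 <= c r + \sum_x Pm r x * coords M x + \sum_j Qm r j * y j.
Hypothesis S_bounded : forall M x, S M -> `|coords M x| <= 1.

(* [g] and [y] stand for [t] times the coordinates and the auxiliary LP variables of an
   element of [S]. *)
Definition cone_constraint (t : R) (g : T * T * bool -> R) (y : 'I_q -> R) : Prop :=
  [/\ 0 <= t, forall r, 0 <= c r * t + \sum_x Pm r x * g x + \sum_j Qm r j * y j,
      forall x, `|g x| <= t &
      forall u v, g (u, v, true) = g (v, u, true) /\ g (u, v, false) = - g (v, u, false)].

Lemma lp_scale (a k : R) (g : T * T * bool -> R) (y : 'I_q -> R) r :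
  a * k + \sum_x Pm r x * (k * g x) + \sum_j Qm r j * (k * y j) =
  k * (a + \sum_x Pm r x * g x + \sum_j Qm r j * y j).
Proof.
rewrite !mulrDr !big_distrr /= mulrC; congr (_ + _ + _); apply: eq_bigr => ? _; ring.
Qed.

Lemma cone_constraint_complete s t : S s -> 0 <= t ->
  exists y, cone_constraint t (fun x => t * coords s x) y.
Proof.
move=> /[dup] /S_LP [herm_s [y Hy]] Ss t_ge0; exists (fun j => t * y j); split=> //.
- by move=> r; rewrite lp_scale; apply: mulr_ge0.
- by move=> x; rewrite normrM ger0_norm // ler_piMr // S_bounded.
- by move=> u v; have [-> ->] := hermitian_coords u v herm_s; rewrite mulrN.
Qed.

Lemma cone_constraint_pos t g y : 0 < t -> cone_constraint t g y ->
  exists s, S s /\ forall x, g x = t * coords s x.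
Proof.
move=> t_gt0 [_ Hr _ gsym]; exists (mat_of_coords (fun x => t^-1 * g x)).
split=> [|x]; last by rewrite coords_of_mat mulrA divff ?gt_eqF // mul1r.
apply/S_LP; split.
  by apply: hermitian_mat_of_coords => u v; have [-> ->] := gsym u v; rewrite mulrN.
exists (fun j => t^-1 * y j) => r; under eq_bigr do rewrite coords_of_mat.
rewrite -[c r](mulfK (lt0r_neq0 t_gt0)) lp_scale.
by apply: mulr_ge0; [rewrite invr_ge0 ltW|apply: Hr].
Qed.

Lemma cone_constraint_sound s0 t g y : S s0 -> cone_constraint t g y ->
  exists s, S s /\ forall x, g x = t * coords s x.
Proof.
move=> Ss0 /[dup] [[t_ge0 _ g_le _]]; have [t0|t_neq0] := eqVneq t 0.
  move=> _; exists s0; split=> // x; rewrite t0 mul0r.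
  by apply/normr0_eq0/le_anti; rewrite normr_ge0 -t0 g_le.
by apply: cone_constraint_pos; rewrite lt_def t_neq0.
Qed.

Lemma polyhedral_cone_constraint (W : finType) (it : W) (ig : T * T * bool -> W) (iy : 'I_q -> W) :
  polyhedral (fun z : W -> R => cone_constraint (z it) (fun x => z (ig x)) (fun j => z (iy j))).
Proof.
have normr_le (a b : R) : `|a| <= b <-> 0 <= b - a /\ 0 <= b + a.
  by rewrite ler_norml; split=> [/andP[? ?]|[? ?]]; [split|apply/andP; split]; lra.
apply: (@polyhedral_ext _ _ (fun z => 0 <= z it /\
  (forall r, 0 <= c r * z it + \sum_x Pm r x * z (ig x) + \sum_j Qm r j * z (iy j)) /\
  (forall x, 0 <= z it - z (ig x) /\ 0 <= z it + z (ig x)) /\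
  forall uv : T * T, z (ig (uv.1, uv.2, true)) = z (ig (uv.2, uv.1, true)) /\
                     z (ig (uv.1, uv.2, false)) = - z (ig (uv.2, uv.1, false)))).
  move=> z; split.
    case=> [? [? [g_le gsym]]]; split=> // [x|u v]; first exact/normr_le/g_le.
    exact: (gsym (u, v)).
  case=> t_ge0 Hr g_le gsym; do 2 (split=> //); split=> [x|[u v]].
    exact/normr_le/g_le.
  exact: gsym.
do 3 (try apply: polyhedralI); try apply: polyhedral_all => ?;
  try apply: polyhedralI; (apply: polyhedral_ge0 || apply: polyhedral_eq); solve_affine.
Qed.
End Cone.

Section ClassicalFirstPartyLP.
Variables (R : realType) (N : nat) (p : 'I_N.+1 -> party).
Local Notation pB := (fun k : 'I_N => p (lift ord0 k)).
Local Notation FF := {ffun 'I_(dI p ord0) -> 'I_(dO p ord0)}.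
Local Notation TA := (idx (dO p) * idx (dI p))%type.
Local Notation TB := (idx (dO pB) * idx (dI pB))%type.
Variables (m q : nat) (c : 'I_m -> R) (Pm : 'I_m -> TB * TB * bool -> R) (Qm : 'I_m -> 'I_q -> R).
Hypothesis JB_LP : forall M, Jfree (p := pB) M <-> Defs.hermitian M /\ exists y : 'I_q -> R,
  forall r, 0 <= c r + \sum_x Pm r x * coords M x + \sum_j Qm r j * y j.

Local Notation V := (FF * option ((TB * TB * bool) + 'I_q))%type.
Local Notation W := ((TA * TA * bool) + V)%type.

Definition weight_var f : W := inr (f, None).
Definition coord_var f x : W := inr (f, Some (inl x)).
Definition slack_var f j : W := inr (f, Some (inr j)).

(* For every deterministic channel f of the first party: the weight t_f, t_f times the
   coordinates of a free Choi matrix s_f of the other parties, and the slack variables. *)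
Definition classical_lp (z : W -> R) : Prop :=
  [/\ forall f, cone_constraint c Pm Qm (z (weight_var f)) (fun x => z (coord_var f x))
                                      (fun j => z (slack_var f j)),
      \sum_f z (weight_var f) = 1 &
      forall x : TA * TA * bool, z (inl x) = \sum_f det_coef R f x.1.1 x.1.2 *
        z (coord_var f (choi_behead x.1.1, choi_behead x.1.2, x.2))].

Lemma polyhedral_classical_lp : polyhedral classical_lp.
Proof.
apply: (@polyhedral_ext _ _ (fun z =>
  (forall f, cone_constraint c Pm Qm (z (weight_var f)) (fun x => z (coord_var f x))
                                      (fun j => z (slack_var f j))) /\
  \sum_f z (weight_var f) = 1 /\
  forall x : TA * TA * bool, z (inl x) =
    \sum_f det_coef R f x.1.1 x.1.2 * z (coord_var f (choi_behead x.1.1, choi_behead x.1.2, x.2)))).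
  by move=> z; split=> [[? [? ?]]|[? ? ?]].
apply: polyhedralI; first by apply: polyhedral_all => f; apply: polyhedral_cone_constraint.
by apply: polyhedralI; try apply: polyhedral_all => ?; apply: polyhedral_eq; solve_affine.
Qed.

Hypotheses (pA_valid : valid_party (p ord0))
  (pA_out : styp (pout (p ord0)) = TC \/ styp (pout (p ord0)) = TI)
  (pA_in : styp (pin (p ord0)) = TC \/ styp (pin (p ord0)) = TI).

Lemma Jfree_classical_lp J : Jfree (p := p) J <->
  Defs.hermitian J /\ exists Y : V -> R, classical_lp (cat_vec (coords J) Y).
Proof.
split.
  move=> /(Jfree_classical_decomposition pA_valid pA_out pA_in) [t [s [t_ge0 t_sum1 Js ->]]].
  split.
    move=> u v; rewrite rmorph_sum; apply: eq_bigr => f _.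
    have [herm_s _] := (JB_LP _).1 (Js f).
    by rewrite /classical_ext det_coefC herm_s !rmorphM /= !conj_realC.
  have [y Hy] := choice (fun f y => cone_constraint c Pm Qm (t f) (fun x => t f * coords (s f) x) y)
    (fun f => cone_constraint_complete JB_LP (@Jfree_coords_le1 _ _ pB) (Js f) (t_ge0 f)).
  exists (fun v : V => match v with
                     | (f, None) => t f
                     | (f, Some (inl x)) => t f * coords (s f) x
                     | (f, Some (inr j)) => y f j end).
  by split=> // x; rewrite /= coords_classical_mixture.
case=> _ [Y [cone t_sum1 Jx]]; pose t f := Y (f, None).
have t_ge0 f : 0 <= t f by case: (cone f).
have [f0 t_f0] : exists f0, 0 < t f0.
  apply/existsP; apply: contraT => /existsPn t_le0; move: t_sum1.
  by rewrite big1 => [/eqP|f _]; [rewrite eq_sym oner_eq0|apply/le_anti; rewrite t_ge0 leNgt t_le0].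
have [s0 [Js0 _]] := cone_constraint_pos JB_LP t_f0 (cone f0).
have [s Hs] := choice (fun f s =>
    Jfree (p := pB) s /\ forall x, Y (f, Some (inl x)) = t f * coords s x)
  (fun f => cone_constraint_sound JB_LP Js0 (cone f)).
have -> : J = fun u v => \sum_f (t f)%:C%C * classical_ext f (s f) u v.
  apply: coords_inj => x; move: (Jx x) => /= ->; rewrite coords_classical_mixture.
  by apply: eq_bigr => f _; case: (Hs f) => _ ->.
by apply: Jfree_convex => // f; apply: Jfree_classical_ext; case: (Hs f).
Qed.
End ClassicalFirstPartyLP.

Theorem proposition7 (R : realType) (N : nat) (p : 'I_N.+1 -> party)
  (hvalid : forall k, valid_party (p k))
  (hAout : styp (pout (p ord0)) = TC \/ styp (pout (p ord0)) = TI)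
  (hAin : styp (pin (p ord0)) = TC \/ styp (pin (p ord0)) = TI)
  (hB : LP_rep (@Jfree R _ (fun k : 'I_N => p (lift ord0 k)))) :
  LP_rep (@Jfree R _ p).
Proof.
case: hB => m [q [c [Pm [Qm JB_LP]]]].
apply: (LP_rep_of_polyhedral (polyhedral_classical_lp c Pm Qm)) => J.
exact: (Jfree_classical_lp JB_LP (hvalid ord0) hAout hAin J).
Qed.
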